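(* For every $r\ge3$, \[K_{A_r}(2\tilde\alpha_{A_r})=K_{C_r}(\tilde\alpha_{C_r}),\] where $2\tilde\alpha_{A_r}=2\varepsilon_1-2\varepsilon_{r+1}\in\mathbb{R}^{r+1}$ and $\tilde\alpha_{C_r}=2\varepsilon_1\in\mathbb{R}^r$.
   Context: $\Phi^+_{A_r}=\{\varepsilon_i-\varepsilon_j:1\le i<j\le r+1\}\subset\mathbb{R}^{r+1}$ and $\Phi^+_{C_r}=\{\varepsilon_i\pm\varepsilon_j:1\le i<j\le r\}\cup\{2\varepsilon_i:1\le i\le r\}\subset\mathbb{R}^r$. For a root system $X$, $K_X(\mu)$ is the number of finite multisets of elements of $\Phi^+_X$ summing to $\mu$. *)

From HB Require Import structures.
From mathcomp Require Import all_boot all_order all_algebra.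
Set Implicit Arguments. Unset Strict Implicit. Unset Printing Implicit Defensive.
Import Order.TTheory GRing.Theory Num.Theory.
Local Open Scope ring_scope.

(* Vectors of Z^n (all roots and weights involved have integer coordinates,
   so working in Z^n instead of R^n is harmless). *)
Definition vec (n : nat) := 'rV[int]_n.

(* standard basis vector epsilon_i (0-indexed) *)
Definition eps (n : nat) (i : 'I_n) : vec n := delta_mx 0 i.

Definition PhiA (r : nat) : seq (vec r.+1) :=
  [seq eps i - eps j | i : 'I_r.+1 <- enum 'I_r.+1, j : 'I_r.+1 <- [seq j : 'I_r.+1 <- enum 'I_r.+1 | (i < j)%N]].

Definition PhiC (r : nat) : seq (vec r) :=
  [seq eps i - eps j | i : 'I_r <- enum 'I_r, j : 'I_r <- [seq j : 'I_r <- enum 'I_r | (i < j)%N]] ++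
  [seq eps i + eps j | i : 'I_r <- enum 'I_r, j : 'I_r <- [seq j : 'I_r <- enum 'I_r | (i < j)%N]] ++
  [seq 2%:Z *: eps i | i : 'I_r <- enum 'I_r].

Definition has_card (T : Type) (P : T -> Prop) (n : nat) : Prop :=
  exists f : 'I_n -> T, injective f /\ (forall x, P x <-> exists i, f i = x).

(* Finite multisets of elements of the (duplicate-free) list of roots Phi are
   multiplicity functions m on the positions of Phi; such a multiset sums to mu
   iff \sum_i m_i Phi_i = mu. *)
Definition Kostant_is (n : nat) (Phi : seq (vec n)) (mu : vec n) (k : nat) : Prop :=
  has_card (fun m : {ffun 'I_(size Phi) -> nat} =>
              \sum_(i < size Phi) (m i)%:Z *: Phi`_i = mu) k.

Definition twoHighA (r : nat) : vec r.+1 :=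
  2%:Z *: eps (@ord0 r) - 2%:Z *: eps (@ord_max r).

(* highest root of C_r: 2 eps_1 (for r >= 1; the value for r = 0 is irrelevant) *)
Definition highC (r : nat) : vec r :=
  match r return vec r with
  | 0 => 0
  | r'.+1 => 2%:Z *: eps (@ord0 r')
  end.

From HB Require Import structures.
From mathcomp Require Import all_boot all_order all_algebra.
From mathcomp Require Import zify.
Set Implicit Arguments. Unset Strict Implicit. Unset Printing Implicit Defensive.
Import Order.TTheory GRing.Theory Num.Theory.

(* In a multiset of positive roots of A_r summing to 2e_1 - 2e_(r+1), the roots e_i - e_j
   with j <= r are also roots of C_r, and the roots e_k - e_(r+1) occur with multiplicities P
   of total 2, so P = 2 delta_a or P = delta_a + delta_b with a < b.  Replacing them by the
   single root 2e_a, resp. e_a + e_b, of C_r is a bijection onto the multisets of positive roots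
   of C_r summing to 2e_1: there the roots e_i - e_j contribute coordinates of total 0, so the
   roots e_i + e_j and 2e_i contribute total 2, i.e. exactly one of them occurs.  Both counts are
   finite because v |-> -(sum_k k v_k) is positive on every positive root of A_r. *)

Lemma has_card_bij (T U : Type) (P : T -> Prop) (Q : U -> Prop) k
    (f : T -> U) (g : U -> T) :
  has_card P k ->
  (forall x, P x -> Q (f x)) -> (forall y, Q y -> P (g y)) ->
  (forall x, P x -> g (f x) = x) -> (forall y, Q y -> f (g y) = y) ->
  has_card Q k.
Proof.
move=> [e [e_inj eP]] PQ QP gK fK; exists (fun i => f (e i)); split.
- move=> i j fe_ij; apply: e_inj.
  have Pi : P (e i) by apply/eP; exists i.
  have Pj : P (e j) by apply/eP; exists j.
  by rewrite -(gK _ Pi) -(gK _ Pj) fe_ij.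
- move=> y; split.
  + by move=> Qy; have /eP [i ei] := QP _ Qy; exists i; rewrite ei fK.
  + by case=> i <-; apply: PQ; apply/eP; exists i.
Qed.

Section WeightTwo.

Variable r : nat.
Implicit Types (a b i j k : 'I_r) (P D : 'I_r -> nat) (Q : 'I_r -> 'I_r -> nat).

Lemma sum_indicator (C : pred 'I_r) b : \sum_(j < r | C j) (j == b : nat) = C b.
Proof.
case Cb: (C b).
  by rewrite (bigD1 b) //= eqxx big1 ?addn0 // => j /andP [_ /negbTE ->].
by rewrite big1 // => j Cj; case: eqP => // jb; rewrite -jb Cj in Cb.
Qed.

(* The [k]-th coordinate of [\sum_i D i *: 2 e_i + \sum_(i < j) Q i j *: (e_i + e_j)]. *)
Definition posWeight D Q k : nat :=
  2 * D k + (\sum_(j < r | k < j) Q k j + \sum_(i < r | i < k) Q i k).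

Definition loopOf P k : nat := P k == 2.
Definition pairOf P i j : nat := (P i == 1) && (P j == 1).

Lemma posWeight_single_pair a b D Q : a < b -> (forall k, D k = 0) ->
    (forall i j, i < j -> Q i j = (i == a) && (j == b)) ->
  forall k, posWeight D Q k = (k == a) + (k == b).
Proof.
move=> ab D0 Qab k; rewrite /posWeight D0 muln0 add0n.
rewrite (eq_bigr (fun j => ((k == a) && (j == b) : nat))); last by move=> j; apply: Qab.
rewrite [X in _ + X](eq_bigr (fun i => ((i == a) && (k == b) : nat))); last by move=> i; apply: Qab.
case: (k =P a) => [->|ka] /=.
  have /negbTE -> : a != b by rewrite neq_ltn ab.
  by rewrite sum_indicator ab big1 // => i _; rewrite andbF.
rewrite big1 ?add0n //; case: (k =P b) => [->|kb] /=.
  by under eq_bigr => i _ do rewrite andbT; rewrite sum_indicator ab.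
by rewrite big1 // => i _; rewrite andbF.
Qed.

Lemma pair_indicator_lt a b i j : a < b -> i < j ->
  ((i == a) || (i == b)) && ((j == a) || (j == b)) = (i == a) && (j == b).
Proof.
move=> ab ij; case: (i =P a) => [ia|ia]; case: (i =P b) => [ib|ib];
  case: (j =P a) => [ja|ja]; case: (j =P b) => [jb|jb] //=; subst; lia.
Qed.

Lemma sum_eq2P P : \sum_(k < r) P k = 2 ->
  (exists a, forall k, P k = 2 * (k == a)) \/
  (exists a b, a < b /\ forall k, P k = (k == a) + (k == b)).
Proof.
move=> sumP.
case: (pickP (fun a => 0 < P a)) => [a Pa_gt0|P0]; last first.
  move: sumP; rewrite big1 // => k _.
  by move: (P0 k) => /= /negbT; rewrite lt0n negbK => /eqP.
move: sumP; rewrite (bigD1 a) //= => sumP.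
have /orP [] : (P a == 2) || (P a == 1) by lia.
- move=> /eqP Pa; left; exists a => k.
  have : \sum_(i < r | i != a) P i == 0 by rewrite Pa in sumP; rewrite -(eqn_add2l 2) sumP.
  rewrite sum_nat_eq0 => /forallP /(_ k) /implyP Pk.
  case: (k =P a) => [->|/eqP ka]; first by rewrite Pa ?eqxx.
  by rewrite muln0; apply/eqP/Pk.
- move=> /eqP Pa.
  have : \sum_(i < r | i != a) P i == 1 by rewrite Pa in sumP; rewrite -(eqn_add2l 1) sumP.
  case/sum_nat_eq1 => b [ba Pb Pother].
  have PE k : P k = (k == a) + (k == b).
    case: (k =P a) => [->|ka]; first by rewrite Pa eq_sym (negbTE ba).
    case: (k =P b) => [->|kb]; first by rewrite Pb.
    by apply: Pother; apply/eqP.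
  right; case: (ltngtP a b) => [ab|ba'|ab].
  + by exists a, b.
  + by exists b, a; split=> // k; rewrite PE addnC.
  + by move: ba; rewrite eq_sym -val_eqE /= ab eqxx.
Qed.

Lemma posWeight_of_sum2 P : \sum_(k < r) P k = 2 ->
  forall k, posWeight (loopOf P) (pairOf P) k = P k.
Proof.
move=> /sum_eq2P [[a Pa]|[a [b [ab Pab]]]] k.
- have P1 i : (P i == 1) = false by rewrite Pa; case: (i == a).
  rewrite /posWeight !big1 ?addn0 => [| i _ | i _]; rewrite /pairOf ?P1 //.
  by rewrite /loopOf Pa; case: (k == a).
- have P1 i : (P i == 1) = (i == a) || (i == b).
    by rewrite Pab; case: (i =P a) => ia; case: (i =P b) => ib //=; subst; rewrite ltnn in ab.
  rewrite (posWeight_single_pair ab) -?Pab // => [i | i j ij].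
    by rewrite /loopOf Pab; case: (i =P a) => ia; case: (i =P b) => ib //=; subst; rewrite ltnn in ab.
  by rewrite /pairOf !P1 pair_indicator_lt.
Qed.

Lemma posWeight_single_loop a D Q : (forall k, D k = (k == a)) ->
    (forall i j, i < j -> Q i j = 0) ->
  forall k, posWeight D Q k = 2 * (k == a).
Proof.
by move=> Da Q0 k; rewrite /posWeight Da !big1 ?addn0 // => i ik; rewrite Q0.
Qed.

Lemma sum_posWeight D Q :
  \sum_(k < r) posWeight D Q k = 2 * (\sum_(k < r) D k + \sum_(i < r) \sum_(j < r | i < j) Q i j).
Proof.
rewrite /posWeight big_split -big_distrr big_split /=.
by rewrite [X in _ + (_ + X)](exchange_big_dep xpredT) //=; lia.
Qed.

Lemma posWeightK D Q : \sum_(k < r) posWeight D Q k = 2 ->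
  (forall i j, i < j -> pairOf (posWeight D Q) i j = Q i j) /\
  (forall k, loopOf (posWeight D Q) k = D k).
Proof.
rewrite sum_posWeight => sum2.
have /orP [] : ((\sum_(k < r) D k == 1) && (\sum_(i < r) \sum_(j < r | i < j) Q i j == 0)) ||
               ((\sum_(k < r) D k == 0) && (\sum_(i < r) \sum_(j < r | i < j) Q i j == 1)) by lia.
- case/andP => /sum_nat_eq1 [a [_ Da Dother]] sumQ.
  have Q0 i j : i < j -> Q i j = 0.
    move=> ij; move: sumQ; rewrite sum_nat_eq0 => /forallP /(_ i) /=.
    by rewrite sum_nat_eq0 => /forallP /(_ j) /implyP /(_ ij) /eqP.
  have DE k : D k = (k == a).
    by case: (k =P a) => [->|/eqP ka]; [rewrite Da | rewrite Dother].
  have qE := posWeight_single_loop DE Q0.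
  split=> [i j ij|k]; rewrite /pairOf /loopOf !qE ?Q0 ?DE //.
    by case: (i == a).
  by case: (k == a).
- case/andP => sumD; rewrite pair_big_dep /= => /sum_nat_eq1 [[a b]] [/= ab Qab Qother].
  have D0 k : D k = 0 by move: sumD; rewrite sum_nat_eq0 => /forallP /(_ k) /eqP.
  have QE i j : i < j -> Q i j = (i == a) && (j == b).
    move=> ij; case: (i =P a) => ia; case: (j =P b) => jb /=.
    + by subst; rewrite Qab.
    + by apply: (Qother (i, j)) => //; apply/eqP; case=> _ e; exact: jb e.
    + by apply: (Qother (i, j)) => //; apply/eqP; case=> e _; exact: ia e.
    + by apply: (Qother (i, j)) => //; apply/eqP; case=> e _; exact: ia e.
  have qE := posWeight_single_pair ab D0 QE.
  have q1 i : ((i == a) + (i == b) == 1) = (i == a) || (i == b).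
    by case: (i =P a) => ia; case: (i =P b) => ib //=; subst; rewrite ltnn in ab.
  split=> [i j ij|k]; rewrite /pairOf /loopOf !qE.
    by rewrite !q1 pair_indicator_lt // QE.
  by rewrite D0; case: (k =P a) => ka; case: (k =P b) => kb //=; subst; rewrite ltnn in ab.
Qed.

End WeightTwo.

Local Open Scope ring_scope.

Lemma Kostant_exists_of_bound n (Phi : seq (vec n)) mu B :
  (forall m : {ffun 'I_(size Phi) -> nat},
     \sum_(i < size Phi) (m i)%:Z *: Phi`_i = mu -> forall i, (m i < B)%N) ->
  exists k, Kostant_is Phi mu k.
Proof.
move=> m_lt.
pose S := [set m : {ffun 'I_(size Phi) -> 'I_B} |
             \sum_(i < size Phi) (val (m i))%:Z *: Phi`_i == mu].
pose emb (m : {ffun 'I_(size Phi) -> 'I_B}) := [ffun i => val (m i)].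
exists #|S|, (fun i => emb (enum_val i)); split.
- move=> i j /ffunP emb_ij; apply: enum_val_inj; apply/ffunP => p; apply: val_inj.
  by have := emb_ij p; rewrite !ffunE.
- move=> m; split=> [m_sol | [i <-]].
  + pose m' := [ffun p => Ordinal (m_lt m m_sol p)].
    have Sm' : m' \in S.
      by rewrite inE; apply/eqP; rewrite -m_sol; apply: eq_bigr => p _; rewrite ffunE.
    exists (enum_rank_in Sm' m'); rewrite enum_rankK_in //.
    by apply/ffunP => p; rewrite !ffunE.
  + have := enum_valP i; rewrite inE => /eqP <-.
    by apply: eq_bigr => p _; rewrite ffunE.
Qed.

(* A functional [w] positive on every root bounds each multiplicity by [mu *m w]. *)
Lemma Kostant_exists_of_weight n (Phi : seq (vec n)) mu (w : 'cV[int]_n) :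
  (forall i : 'I_(size Phi), 0 < (Phi`_i *m w) 0 0) -> exists k, Kostant_is Phi mu k.
Proof.
move=> w_gt0; apply: (@Kostant_exists_of_bound _ _ _ (absz ((mu *m w) 0 0)).+1).
move=> m <- p; rewrite ltnS -lez_nat abszE; apply: le_trans (ler_norm _).
rewrite mulmx_suml summxE; under eq_bigr => q _ do rewrite -scalemxAl mxE.
have term_ge0 q : 0 <= (m q)%:Z * (Phi`_q *m w) 0 0 by rewrite mulr_ge0 // ltW.
rewrite (bigD1 p) //= -[X in X <= _]addr0 lerD ?sumr_ge0 //.
by rewrite ler_peMr // -gtz0_ge1.
Qed.

Section Multiplicity.

Variables (n : nat) (X : eqType) (x0 : X) (root : X -> vec n) (labels : seq X).
Variable Phi : seq (vec n).
Hypotheses (PhiE : Phi = map root labels) (labels_uniq : uniq labels).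

(* [m] is indexed by positions in [Phi]; [multiplicity] reads it by root label instead. *)
Definition multiplicity (m : {ffun 'I_(size Phi) -> nat}) (x : X) : nat :=
  if insub (index x labels) is Some p then m p else 0%N.

Lemma size_labels : size Phi = size labels.
Proof. by rewrite PhiE size_map. Qed.

Lemma nth_Phi q : (q < size labels)%N -> Phi`_q = root (nth x0 labels q).
Proof. by move=> q_lt; rewrite PhiE (nth_map x0). Qed.

Lemma mem_nth_labels (p : 'I_(size Phi)) : nth x0 labels p \in labels.
Proof. by rewrite mem_nth // -size_labels. Qed.

Lemma multiplicity_nth (m : {ffun 'I_(size Phi) -> nat}) (p : 'I_(size Phi)) : multiplicity m (nth x0 labels p) = m p.
Proof.
rewrite /multiplicity index_uniq -?size_labels //.
by case: insubP => [q _ /val_inj -> // |]; rewrite ltn_ord.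
Qed.

Lemma multiplicity_ffun (F : X -> nat) x : x \in labels ->
  multiplicity [ffun p : 'I_(size Phi) => F (nth x0 labels p)] x = F x.
Proof.
move=> x_in; rewrite /multiplicity; case: insubP => [q _ qE|].
  by rewrite ffunE qE nth_index.
by rewrite size_labels index_mem x_in.
Qed.

Lemma multiplicity_inj (m1 m2 : {ffun 'I_(size Phi) -> nat}) :
  (forall x, x \in labels -> multiplicity m1 x = multiplicity m2 x) -> m1 = m2.
Proof.
move=> m12; apply/ffunP => p.
by rewrite -!multiplicity_nth; apply/m12/mem_nth_labels.
Qed.

Lemma sum_multiplicity (m : {ffun 'I_(size Phi) -> nat}) :
  \sum_(p < size Phi) (m p)%:Z *: Phi`_p = \sum_(x <- labels) (multiplicity m x)%:Z *: root x.
Proof.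
rewrite (big_nth x0) big_mkord -size_labels; apply: eq_bigr => p _.
by rewrite multiplicity_nth nth_Phi // -size_labels.
Qed.

End Multiplicity.

Definition labelsA r : seq ('I_r.+1 * 'I_r.+1) :=
  [seq (i, j) | i : 'I_r.+1 <- enum 'I_r.+1, j : 'I_r.+1 <- [seq j : 'I_r.+1 <- enum 'I_r.+1 | (i < j)%N]].

Definition rootA r (x : 'I_r.+1 * 'I_r.+1) : vec r.+1 := eps x.1 - eps x.2.

(* Labels [(0, i, j)], [(1, i, j)] and [(2, i, i)] stand for [e_i - e_j], [e_i + e_j] and [2 e_i]. *)
Definition labelsC r : seq (nat * 'I_r * 'I_r) :=
  [seq (0%N, i, j) | i : 'I_r <- enum 'I_r, j : 'I_r <- [seq j : 'I_r <- enum 'I_r | (i < j)%N]] ++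
  [seq (1%N, i, j) | i : 'I_r <- enum 'I_r, j : 'I_r <- [seq j : 'I_r <- enum 'I_r | (i < j)%N]] ++
  [seq (2%N, i, i) | i : 'I_r <- enum 'I_r].

Definition rootC r (x : nat * 'I_r * 'I_r) : vec r :=
  let: (t, i, j) := x in
  if t == 0%N then eps i - eps j else if t == 1%N then eps i + eps j else 2%:Z *: eps i.

Lemma map_allpairs_dep (S : Type) (T : S -> Type) (R R' : Type)
    (f : forall x, T x -> R) (h : R -> R') s t :
  map h (allpairs_dep f s t) = allpairs_dep (fun x y => h (f x y)) s t.
Proof. by elim: s => //= x s IHs; rewrite map_cat IHs -map_comp. Qed.

Lemma PhiA_labels r : PhiA r = map (@rootA r) (labelsA r).
Proof. by rewrite /PhiA /labelsA map_allpairs_dep. Qed.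

Lemma PhiC_labels r : PhiC r = map (@rootC r) (labelsC r).
Proof. by rewrite /PhiC /labelsC !map_cat !map_allpairs_dep -map_comp. Qed.

Lemma allpairs_enum_uniq (T : finType) (V : eqType) (P : T -> T -> bool) (f : T -> T -> V) :
  (forall a b c d, f a b = f c d -> a = c /\ b = d) ->
  uniq [seq f i j | i : T <- enum T, j : T <- [seq j : T <- enum T | P i j]].
Proof.
move=> f_inj; apply: allpairs_uniq_dep.
- exact: enum_uniq.
- by move=> x _; apply/filter_uniq/enum_uniq.
- by move=> [a b] [c d] _ _ /= /f_inj [-> ->].
Qed.

Lemma labelsA_uniq r : uniq (labelsA r).
Proof. by apply: allpairs_enum_uniq => a b c d [-> ->]. Qed.

Lemma labelsC_uniq r : uniq (labelsC r).
Proof.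
rewrite /labelsC cat_uniq; apply/and3P; split.
- by apply: allpairs_enum_uniq => a b c d [-> ->].
- apply/hasPn => x; rewrite mem_cat => /orP [] x_in; apply/negP => /allpairsPdep [k [l [_ _ xE]]];
    move: x_in; rewrite xE.
  + by move/allpairsPdep => [i [j [_ _ []]]].
  + by move/mapP => [i _ []].
rewrite cat_uniq; apply/and3P; split.
- by apply: allpairs_enum_uniq => a b c d [-> ->].
- by apply/hasPn => x /mapP [i _ ->]; apply/negP => /allpairsPdep [k [l [_ _ []]]].
- by rewrite map_inj_uniq ?enum_uniq // => a b [->].
Qed.

Lemma mem_allpairs_lt r (t : nat) (i j : 'I_r) : (i < j)%N ->
  (t, i, j) \in [seq (t, i, j) | i : 'I_r <- enum 'I_r, j : 'I_r <- [seq j : 'I_r <- enum 'I_r | (i < j)%N]].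
Proof. by move=> ij; apply/allpairsPdep; exists i, j; rewrite mem_enum mem_filter ij mem_enum. Qed.

Lemma mem_labelsA r (i j : 'I_r.+1) : ((i, j) \in labelsA r) = (i < j)%N.
Proof.
apply/allpairsPdep/idP => [[k [l [_]]]|ij].
  by rewrite mem_filter => /andP [kl _] [-> ->].
by exists i, j; rewrite mem_enum mem_filter ij mem_enum.
Qed.

Lemma mem_labelsC0 r (i j : 'I_r) : (i < j)%N -> (0%N, i, j) \in labelsC r.
Proof. by move=> ij; rewrite mem_cat mem_allpairs_lt. Qed.

Lemma mem_labelsC1 r (i j : 'I_r) : (i < j)%N -> (1%N, i, j) \in labelsC r.
Proof. by move=> ij; rewrite !mem_cat mem_allpairs_lt ?orbT. Qed.

Lemma mem_labelsC2 r (i : 'I_r) : (2%N, i, i) \in labelsC r.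
Proof. by rewrite !mem_cat; apply/or3P/Or33/mapP; exists i; rewrite ?mem_enum. Qed.

Lemma labelsCP r x : x \in labelsC r ->
  [\/ exists i j : 'I_r, (i < j)%N /\ x = (0%N, i, j),
      exists i j : 'I_r, (i < j)%N /\ x = (1%N, i, j) |
      exists i : 'I_r, x = (2%N, i, i)].
Proof.
rewrite !mem_cat => /or3P [] .
- by move/allpairsPdep => [i [j [_]]]; rewrite mem_filter => /andP [ij _] ->; apply: Or31; exists i, j.
- by move/allpairsPdep => [i [j [_]]]; rewrite mem_filter => /andP [ij _] ->; apply: Or32; exists i, j.
- by move/mapP => [i _ ->]; apply: Or33; exists i.
Qed.

Lemma big_allpairs_lt r (V : nmodType) (F : 'I_r -> 'I_r -> V) :
  \sum_(x <- [seq (i, j) | i : 'I_r <- enum 'I_r, j : 'I_r <- [seq j : 'I_r <- enum 'I_r | (i < j)%N]])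
     F x.1 x.2 = \sum_(i < r) \sum_(j < r | (i < j)%N) F i j.
Proof.
rewrite big_allpairs_dep big_enum /=; apply: eq_bigr => i _.
by rewrite big_filter big_enum_cond.
Qed.

Lemma big_labelsA r (V : nmodType) (F : 'I_r.+1 * 'I_r.+1 -> V) :
  \sum_(x <- labelsA r) F x = \sum_(i < r.+1) \sum_(j < r.+1 | (i < j)%N) F (i, j).
Proof. by rewrite -big_allpairs_lt; apply: eq_bigr => -[]. Qed.

Lemma big_labelsC r (V : nmodType) (F : nat * 'I_r * 'I_r -> V) :
  \sum_(x <- labelsC r) F x =
    \sum_(i < r) \sum_(j < r | (i < j)%N) F (0%N, i, j) +
   (\sum_(i < r) \sum_(j < r | (i < j)%N) F (1%N, i, j) + \sum_(i < r) F (2%N, i, i)).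
Proof.
rewrite !big_cat !big_allpairs_dep big_map !big_enum /=; congr (_ + (_ + _));
by apply: eq_bigr => i _; rewrite big_filter big_enum_cond.
Qed.

Lemma sum_mul_delta n (c : 'I_n -> int) k : \sum_(i < n) c i * (k == i)%:R = c k.
Proof.
rewrite (bigD1 k) //= eqxx mulr1 big1 ?addr0 // => i /negbTE ik.
by rewrite eq_sym ik mulr0.
Qed.

Lemma coord_sum_pairs n (s : int) (c : 'I_n -> 'I_n -> int) k :
  (\sum_(i < n) \sum_(j < n | (i < j)%N) c i j *: (eps i + s *: eps j)) 0 k =
  \sum_(j < n | (k < j)%N) c k j + s * \sum_(i < n | (i < k)%N) c i k.
Proof.
rewrite summxE; under eq_bigr => i _ do rewrite summxE.
under eq_bigr => i _ do under eq_bigr => j _ do rewrite !mxE eqxx /= mulrDr mulrCA.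
under eq_bigr => i _ do rewrite big_split /= -mulr_sumr -mulr_suml.
rewrite big_split /= sum_mul_delta -mulr_sumr; congr (_ + s * _).
rewrite (exchange_big_dep xpredT) //=.
under eq_bigr => j _ do rewrite -mulr_suml.
exact: sum_mul_delta.
Qed.

Lemma coord_sum_double n (d : 'I_n -> int) k :
  (\sum_(i < n) d i *: (2%:Z *: eps i)) 0 k = 2 * d k.
Proof.
rewrite summxE; under eq_bigr => i _ do rewrite !mxE eqxx /= mulrCA.
by rewrite -mulr_sumr sum_mul_delta.
Qed.

(* The [k]-th coordinate of [\sum_(i < j) c i j *: (e_i - e_j)]. *)
Definition netFlow n (c : 'I_n -> 'I_n -> int) (k : 'I_n) : int :=
  \sum_(j < n | (k < j)%N) c k j - \sum_(i < n | (i < k)%N) c i k.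

Lemma coord_sum_diffs n (c : 'I_n -> 'I_n -> int) k :
  (\sum_(i < n) \sum_(j < n | (i < j)%N) c i j *: (eps i - eps j)) 0 k = netFlow c k.
Proof.
under eq_bigr => i _ do under eq_bigr => j _ do rewrite -scaleN1r.
by rewrite coord_sum_pairs mulN1r.
Qed.

Lemma sum_netFlow n (c : 'I_n -> 'I_n -> int) : \sum_(k < n) netFlow c k = 0.
Proof. by rewrite sumrB [X in _ - X](exchange_big_dep xpredT) //= subrr. Qed.

Lemma big_ord_recr_lift r (P : pred 'I_r.+1) (F : 'I_r.+1 -> int) :
  \sum_(j < r.+1 | P j) F j =
  \sum_(j < r | P (lift ord_max j)) F (lift ord_max j) + (if P ord_max then F ord_max else 0).
Proof.
rewrite big_mkcond big_ord_recr /= [in RHS]big_mkcond; congr (_ + _).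
by apply: eq_bigr => j _; rewrite (_ : widen_ord _ j = lift ord_max j) //; apply: val_inj; rewrite /= /bump leqNgt ltn_ord.
Qed.

Lemma lt_lift_max r (i j : 'I_r) : (lift ord_max i < lift ord_max j)%N = (i < j)%N.
Proof. by rewrite !lift_max. Qed.

Lemma lift_max_lt r (i : 'I_r) : (lift ord_max i < @ord_max r)%N.
Proof. by rewrite lift_max ltn_ord. Qed.

Lemma netFlow_lift_max r (c : 'I_r.+1 -> 'I_r.+1 -> int) (k : 'I_r) :
  netFlow c (lift ord_max k) =
  netFlow (fun i j => c (lift ord_max i) (lift ord_max j)) k + c (lift ord_max k) ord_max.
Proof.
rewrite /netFlow !big_ord_recr_lift /= lift_max_lt ltnNge ltnW ?lift_max_lt //= addr0.
under eq_bigl => j do rewrite lt_lift_max.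
under [X in _ - X]eq_bigl => i do rewrite lt_lift_max.
by rewrite addrAC.
Qed.

Lemma netFlow_ord_max r (c : 'I_r.+1 -> 'I_r.+1 -> int) :
  netFlow c ord_max = - \sum_(k < r) c (lift ord_max k) ord_max.
Proof.
rewrite /netFlow !big_ord_recr_lift /= ltnn !addr0 big1 ?sub0r => [|j]; last first.
  by rewrite ltnNge ltnW ?lift_max_lt.
by under eq_bigl => j do rewrite lift_max_lt.
Qed.

Lemma Posz_sum (I : Type) (s : seq I) (P : pred I) (F : I -> nat) :
  ((\sum_(i <- s | P i) F i)%N)%:Z = \sum_(i <- s | P i) (F i)%:Z.
Proof. exact: (big_morph Posz PoszD (erefl 0%:Z)). Qed.

Lemma highC_coord r (k : 'I_r) : highC r 0 k = if val k == 0%N then 2 else 0.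
Proof.
by case: r k => [[]//|s] [[|k] k_lt]; rewrite /= !mxE ?mulr0.
Qed.

Lemma twoHighA_lift_max r (k : 'I_r) : twoHighA r 0 (lift ord_max k) = highC r 0 k.
Proof.
rewrite highC_coord /twoHighA !mxE eqxx /=.
have /negbTE -> : lift ord_max k != ord_max by rewrite eq_sym neq_lift.
by rewrite -val_eqE /= /bump leqNgt ltn_ord; case: (val k == 0%N); rewrite ?mulr0 ?mulr1 ?subr0.
Qed.

Lemma twoHighA_ord_max r : (0 < r)%N -> twoHighA r 0 ord_max = -2.
Proof.
rewrite lt0n => r_neq0; rewrite /twoHighA !mxE eqxx -val_eqE /= (negbTE r_neq0) eqxx.
by rewrite mulr0 mulr1 sub0r.
Qed.

(* [2 e_1 - 2 e_(r+1)] agrees with [highC r] on the first [r] coordinates; the last one says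
   that the roots [e_k - e_(r+1)] occur twice in total. *)
Definition partitionA r (M : 'I_r.+1 * 'I_r.+1 -> nat) : Prop :=
  (forall k : 'I_r,
     netFlow (fun i j => (M (lift ord_max i, lift ord_max j))%:Z) k + (M (lift ord_max k, ord_max))%:Z
     = highC r 0 k) /\
  (\sum_(k < r) M (lift ord_max k, ord_max) = 2)%N.

Definition posWeightC r (N : nat * 'I_r * 'I_r -> nat) : 'I_r -> nat :=
  posWeight (fun k => N (2%N, k, k)) (fun i j => N (1%N, i, j)).

Definition partitionC r (N : nat * 'I_r * 'I_r -> nat) : Prop :=
  forall k : 'I_r, netFlow (fun i j => (N (0%N, i, j))%:Z) k + (posWeightC N k)%:Z = highC r 0 k.

Lemma partitionA_iff r (M : 'I_r.+1 * 'I_r.+1 -> nat) : (0 < r)%N ->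
  \sum_(i < r.+1) \sum_(j < r.+1 | (i < j)%N) (M (i, j))%:Z *: (eps i - eps j) = twoHighA r
  <-> partitionA M.
Proof.
move=> r_gt0; split=> [sumE | [liftE maxE]].
- split=> [k | ].
    by rewrite -(netFlow_lift_max (fun a b => (M (a, b))%:Z)) -coord_sum_diffs sumE twoHighA_lift_max.
  have := congr1 (fun v : vec r.+1 => v 0 ord_max) sumE.
  rewrite /= coord_sum_diffs netFlow_ord_max twoHighA_ord_max // -Posz_sum.
  by move/eqP; rewrite eqr_opp => /eqP [].
- apply/rowP => k; rewrite coord_sum_diffs; case: (unliftP ord_max k) => [k' ->|->].
    by rewrite netFlow_lift_max twoHighA_lift_max liftE.
  by rewrite netFlow_ord_max twoHighA_ord_max // -Posz_sum maxE.
Qed.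

Lemma partitionC_iff r (N : nat * 'I_r * 'I_r -> nat) :
  \sum_(i < r) \sum_(j < r | (i < j)%N) (N (0%N, i, j))%:Z *: (eps i - eps j) +
  (\sum_(i < r) \sum_(j < r | (i < j)%N) (N (1%N, i, j))%:Z *: (eps i + eps j) +
   \sum_(i < r) (N (2%N, i, i))%:Z *: (2%:Z *: eps i)) = highC r
  <-> partitionC N.
Proof.
have coordE k : (\sum_(i < r) \sum_(j < r | (i < j)%N) (N (0%N, i, j))%:Z *: (eps i - eps j) +
  (\sum_(i < r) \sum_(j < r | (i < j)%N) (N (1%N, i, j))%:Z *: (eps i + eps j) +
   \sum_(i < r) (N (2%N, i, i))%:Z *: (2%:Z *: eps i))) 0 k =
  netFlow (fun i j => (N (0%N, i, j))%:Z) k + (posWeightC N k)%:Z.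
  rewrite !mxE coord_sum_diffs coord_sum_double.
  under eq_bigr => i _ do under eq_bigr => j _ do rewrite -[eps j]scale1r.
  rewrite coord_sum_pairs mul1r /posWeightC /posWeight PoszD PoszM PoszD !Posz_sum.
  by congr (_ + _); rewrite addrC.
split=> [sumE k | solC]; first by rewrite -coordE sumE.
by apply/rowP => k; rewrite coordE solC.
Qed.

Lemma sum_highC r : (0 < r)%N -> \sum_(k < r) highC r 0 k = 2.
Proof.
by case: r => // s _; rewrite big_ord_recl big1 ?addr0 => [|k _]; rewrite highC_coord.
Qed.

Lemma sum_posWeightC r (N : nat * 'I_r * 'I_r -> nat) : (0 < r)%N ->
  partitionC N -> (\sum_(k < r) posWeightC N k = 2)%N.
Proof.
move=> r_gt0 solC; have := sum_highC r_gt0.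
by rewrite -(eq_bigr _ (fun k _ => solC k)) big_split /= sum_netFlow add0r -Posz_sum => -[].
Qed.

Lemma eq_netFlow n (c c' : 'I_n -> 'I_n -> int) :
  (forall i j : 'I_n, (i < j)%N -> c i j = c' i j) -> netFlow c =1 netFlow c'.
Proof.
move=> cc' k; congr (_ - _); apply: eq_bigr => i ik; exact: cc'.
Qed.

Lemma KostantA_exists r : exists k, Kostant_is (PhiA r) (twoHighA r) k.
Proof.
apply: (@Kostant_exists_of_weight _ _ _ (\col_k - (k%:Z))) => p.
have := mem_nth_labels (ord0, ord0) (PhiA_labels r) p.
rewrite (nth_Phi (ord0, ord0) (PhiA_labels r)) -?(size_labels (PhiA_labels r)) //.
case: (nth _ _ _) => i j; rewrite mem_labelsA /rootA /= => ij.
by rewrite mulmxBl -!rowE !mxE opprK addrC subr_gt0 ltz_nat.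
Qed.

Section Bijection.

Variable s : nat.
Local Notation r := s.+1.
Local Notation multA := {ffun 'I_(size (PhiA r)) -> nat}.
Local Notation multC := {ffun 'I_(size (PhiC r)) -> nat}.

Definition lastColumn (M : 'I_r.+1 * 'I_r.+1 -> nat) (k : 'I_r) : nat :=
  M (lift ord_max k, ord_max).

Definition labelsToC (M : 'I_r.+1 * 'I_r.+1 -> nat) (x : nat * 'I_r * 'I_r) : nat :=
  let: (t, i, j) := x in
  if t == 0%N then M (lift ord_max i, lift ord_max j)
  else if t == 1%N then pairOf (lastColumn M) i j
  else loopOf (lastColumn M) i.

Definition labelsToA (N : nat * 'I_r * 'I_r -> nat) (x : 'I_r.+1 * 'I_r.+1) : nat :=
  let: (i, j) := x in
  match unlift ord_max i, unlift ord_max j with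
  | Some i', Some j' => N (0%N, i', j')
  | Some i', None => posWeightC N i'
  | _, _ => 0%N
  end.

Definition toC (m : multA) : multC :=
  [ffun p : 'I_(size (PhiC r)) => labelsToC (multiplicity (labelsA r) m) (nth (0%N, ord0, ord0) (labelsC r) p)].

Definition toA (m : multC) : multA :=
  [ffun p : 'I_(size (PhiA r)) => labelsToA (multiplicity (labelsC r) m) (nth (ord0, ord0) (labelsA r) p)].

Lemma solA_iff (m : multA) :
  \sum_(p < size (PhiA r)) (m p)%:Z *: (PhiA r)`_p = twoHighA r <->
  partitionA (multiplicity (labelsA r) m).
Proof.
rewrite (sum_multiplicity (ord0, ord0) (PhiA_labels r) (labelsA_uniq r)) big_labelsA.
exact: partitionA_iff.
Qed.

Lemma solC_iff (m : multC) :
  \sum_(p < size (PhiC r)) (m p)%:Z *: (PhiC r)`_p = highC r <->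
  partitionC (multiplicity (labelsC r) m).
Proof.
rewrite (sum_multiplicity (0%N, ord0, ord0) (PhiC_labels r) (labelsC_uniq r)) big_labelsC.
exact: partitionC_iff.
Qed.

Lemma multiplicity_toC m x : x \in labelsC r ->
  multiplicity (labelsC r) (toC m) x = labelsToC (multiplicity (labelsA r) m) x.
Proof. by move=> x_in; rewrite /toC (multiplicity_ffun _ (PhiC_labels r)). Qed.

Lemma multiplicity_toA m x : x \in labelsA r ->
  multiplicity (labelsA r) (toA m) x = labelsToA (multiplicity (labelsC r) m) x.
Proof. by move=> x_in; rewrite /toA (multiplicity_ffun _ (PhiA_labels r)). Qed.

Lemma posWeightC_toC m k :
  posWeightC (multiplicity (labelsC r) (toC m)) k =
  posWeight (loopOf (lastColumn (multiplicity (labelsA r) m)))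
            (pairOf (lastColumn (multiplicity (labelsA r) m))) k.
Proof.
rewrite /posWeightC /posWeight multiplicity_toC ?mem_labelsC2 //.
by congr (_ + (_ + _)); apply: eq_bigr => i ik; rewrite multiplicity_toC ?mem_labelsC1.
Qed.

Lemma toC_sol (m : multA) :
  \sum_(p < size (PhiA r)) (m p)%:Z *: (PhiA r)`_p = twoHighA r ->
  \sum_(p < size (PhiC r)) (toC m p)%:Z *: (PhiC r)`_p = highC r.
Proof.
move=> /solA_iff [liftE sum2]; apply/solC_iff => k.
rewrite posWeightC_toC posWeight_of_sum2 // -[RHS](liftE k); congr (_ + _).
by apply: eq_netFlow => i j ij; rewrite multiplicity_toC ?mem_labelsC0.
Qed.

Lemma toA_sol (m : multC) :
  \sum_(p < size (PhiC r)) (m p)%:Z *: (PhiC r)`_p = highC r ->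
  \sum_(p < size (PhiA r)) (toA m p)%:Z *: (PhiA r)`_p = twoHighA r.
Proof.
move=> /solC_iff solC; apply/solA_iff; split=> [k|].
- rewrite multiplicity_toA ?mem_labelsA ?lift_max_lt //= liftK unlift_none -(solC k).
  congr (_ + _); apply: eq_netFlow => i j ij.
  by rewrite multiplicity_toA ?mem_labelsA ?lt_lift_max //= !liftK.
- rewrite -(sum_posWeightC _ solC) //; apply: eq_bigr => k _.
  by rewrite /lastColumn multiplicity_toA ?mem_labelsA ?lift_max_lt //= liftK unlift_none.
Qed.

Lemma toCK (m : multA) :
  \sum_(p < size (PhiA r)) (m p)%:Z *: (PhiA r)`_p = twoHighA r -> toA (toC m) = m.
Proof.
move=> /solA_iff [_ sum2].
apply: (multiplicity_inj (ord0, ord0) (PhiA_labels r) (labelsA_uniq r)) => -[i j].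
rewrite mem_labelsA => ij; rewrite multiplicity_toA ?mem_labelsA //=.
case: unliftP => [i' iE|iE]; last by rewrite iE ltnNge leq_ord in ij.
case: unliftP => [j' jE|jE].
  by rewrite multiplicity_toC ?mem_labelsC0 /= ?iE ?jE // -lt_lift_max -iE -jE.
by rewrite posWeightC_toC posWeight_of_sum2 // iE jE.
Qed.

Lemma toAK (m : multC) :
  \sum_(p < size (PhiC r)) (m p)%:Z *: (PhiC r)`_p = highC r -> toC (toA m) = m.
Proof.
move=> /solC_iff solC; have [pairK loopK] := posWeightK (sum_posWeightC (ltn0Sn s) solC).
apply: (multiplicity_inj (0%N, ord0, ord0) (PhiC_labels r) (labelsC_uniq r)) => x.
case/labelsCP => [[i [j [ij ->]]] | [i [j [ij ->]]] | [i ->]];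
  rewrite multiplicity_toC ?mem_labelsC0 ?mem_labelsC1 ?mem_labelsC2 //=.
- by rewrite multiplicity_toA ?mem_labelsA ?lt_lift_max //= !liftK.
- rewrite /pairOf /lastColumn !multiplicity_toA ?mem_labelsA ?lift_max_lt //= !liftK unlift_none.
  exact: pairK.
- rewrite /loopOf /lastColumn multiplicity_toA ?mem_labelsA ?lift_max_lt //= liftK unlift_none.
  exact: loopK.
Qed.

End Bijection.

Theorem mainTheorem15 (r : nat) (hr : (3 <= r)%N) :
  exists k : nat, Kostant_is (PhiA r) (twoHighA r) k /\ Kostant_is (PhiC r) (highC r) k.
Proof.
case: r hr => // s _.
have [k KA] := KostantA_exists s.+1.
exists k; split=> //.
exact: has_card_bij KA (@toC_sol s) (@toA_sol s) (@toCK s) (@toAK s).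
Qed.
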